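(* Suppose the positive sequences $\{\gamma_k\}$, $\{\lambda_k\}$ satisfy Assumption (A2), and let $\{x_k\}$ be generated by the IR-IG method. Then (a) $\lim_{k\to\infty}\|x_k-x_{\lambda_{k-1}}^*\|=0$; (b) if in addition $\lim_{k\to\infty}\lambda_k=0$, then $x_k\to x_h^*$.
   Context: Standing setup: $X\subset\mathbb{R}^n$ is nonempty, compact and convex. $f_1,\dots,f_m:\mathbb{R}^n\to\mathbb{R}$ are convex (possibly nondifferentiable) functions and $f=\sum_{i=1}^m f_i$. $h:\mathbb{R}^n\to\mathbb{R}$ is strongly convex with parameter $\mu_h>0$ (possibly nondifferentiable). Let $X^*=\arg\min_{x\in X}f(x)$ and let $x_h^*$ be the unique minimizer of $h$ over $X^*$. For $\lambda>0$, $x_\lambda^*$ denotes the unique minimizer of $f+\lambda h$ over $X$. $\mathcal{P}_X$ denotes Euclidean projection onto $X$. IR-IG method: given $x_0\in X$ and positive sequences $\{\gamma_k\}$, $\{\lambda_k\}$, for each $k\ge0$ set $x_{k,0}=x_k$; for $i=0,\dots,m-1$ pick any $g_{f_{i+1}}(x_{k,i})\in\partial f_{i+1}(x_{k,i})$ and $g_h(x_{k,i})\in\partial h(x_{k,i})$ and set $x_{k,i+1}=\mathcal{P}_X\big(x_{k,i}-\gamma_k\big(g_{f_{i+1}}(x_{k,i})+\tfrac{\lambda_k}{m}g_h(x_{k,i})\big)\big)$; then set $x_{k+1}=x_{k,m}$. Assumption (A2) on $\{\gamma_k\},\{\lambda_k\}$: (a) both are non-increasing positive sequences with $\gamma_0\lambda_0\le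 2m/\mu_h$; (b) $\sum_{k=0}^\infty\gamma_k\lambda_k=\infty$; (c) $\sum_{k=1}^\infty\frac{1}{\gamma_k\lambda_k}\left(\frac{\lambda_{k-1}}{\lambda_k}-1\right)^2<\infty$; (d) $\sum_{k=0}^\infty\gamma_k^2<\infty$; (e) $\lim_{k\to\infty}\frac{1}{\gamma_k^2\lambda_k^2}\left(\frac{\lambda_{k-1}}{\lambda_k}-1\right)^2=0$; (f) $\lim_{k\to\infty}\gamma_k/\lambda_k=0$. *)

From mathcomp Require Import ssreflect ssrfun ssrbool eqtype ssrnat seq fintype bigop.
From Stdlib Require Import Reals.
Open Scope R_scope.

Definition vec (n : nat) := 'I_n -> R.

Definition vadd {n} (x y : vec n) : vec n := fun i => x i + y i.
Definition vsub {n} (x y : vec n) : vec n := fun i => x i - y i.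
Definition vscale {n} (a : R) (x : vec n) : vec n := fun i => a * x i.
Definition dot {n} (x y : vec n) : R := \big[Rplus/0]_(i < n) (x i * y i).
Definition vnorm {n} (x : vec n) : R := sqrt (dot x x).

Definition convex_set {n} (X : vec n -> Prop) : Prop :=
  forall x y t, X x -> X y -> 0 <= t <= 1 ->
    X (vadd (vscale t x) (vscale (1 - t) y)).
(* Compactness in R^n (Heine-Borel): closed and bounded. *)
Definition closed_set {n} (X : vec n -> Prop) : Prop :=
  forall (u : nat -> vec n) (l : vec n),
    (forall k, X (u k)) -> Un_cv (fun k => vnorm (vsub (u k) l)) 0 -> X l.
Definition bounded_set {n} (X : vec n -> Prop) : Prop :=
  exists M, forall x, X x -> vnorm x <= M.
Definition compact_set {n} (X : vec n -> Prop) : Prop :=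
  closed_set X /\ bounded_set X.

Definition convex_fun {n} (f : vec n -> R) : Prop :=
  forall x y t, 0 <= t <= 1 ->
    f (vadd (vscale t x) (vscale (1 - t) y)) <= t * f x + (1 - t) * f y.
Definition strongly_convex {n} (mu : R) (h : vec n -> R) : Prop :=
  forall x y t, 0 <= t <= 1 ->
    h (vadd (vscale t x) (vscale (1 - t) y))
      <= t * h x + (1 - t) * h y - mu / 2 * t * (1 - t) * (vnorm (vsub x y))^2.
Definition subgrad {n} (f : vec n -> R) (x g : vec n) : Prop :=
  forall y, f x + dot g (vsub y x) <= f y.

Definition is_argmin {n} (X : vec n -> Prop) (F : vec n -> R) (p : vec n) : Prop :=
  X p /\ forall y, X y -> F p <= F y.
Definition is_proj {n} (X : vec n -> Prop) (x p : vec n) : Prop :=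
  X p /\ forall y, X y -> vnorm (vsub x p) <= vnorm (vsub x y).

(* f = sum_{i=1}^m f_i, with the f_i given as fi 1, ..., fi m. *)
Definition fsum {n} (m : nat) (fi : nat -> vec n -> R) (x : vec n) : R :=
  \big[Rplus/0]_(0 <= i < m) fi i.+1 x.

(* The IR-IG iteration: xk k = x_k, xin k i = x_{k,i}, gf k i and gh k i are the
   chosen subgradients of f_{i+1} and h at x_{k,i}. *)
Definition IRIG {n} (X : vec n -> Prop) (m : nat) (fi : nat -> vec n -> R)
  (h : vec n -> R) (gamma lambda : nat -> R)
  (xk : nat -> vec n) (xin : nat -> nat -> vec n) (gf gh : nat -> nat -> vec n) : Prop :=
  X (xk 0%nat) /\
  forall k, xin k 0%nat = xk k /\
    (forall i, (i < m)%nat ->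
       subgrad (fi i.+1) (xin k i) (gf k i) /\
       subgrad h (xin k i) (gh k i) /\
       is_proj X
         (vsub (xin k i)
               (vscale (gamma k) (vadd (gf k i) (vscale (lambda k / INR m) (gh k i)))))
         (xin k i.+1)) /\
    xk k.+1 = xin k m.

Definition assumption_A2 (m : nat) (mu : R) (gamma lambda : nat -> R) : Prop :=
  (forall k, 0 < gamma k /\ 0 < lambda k) /\
  (forall k, gamma k.+1 <= gamma k /\ lambda k.+1 <= lambda k) /\
  gamma 0%nat * lambda 0%nat <= 2 * INR m / mu /\
  cv_infty (fun N => sum_f_R0 (fun k => gamma k * lambda k) N) /\
  (* (c)  sum over k >= 1 *)
  (exists l, Un_cv (fun N => sum_f_R0 (fun k =>
      / (gamma k.+1 * lambda k.+1) * (lambda k / lambda k.+1 - 1)^2) N) l) /\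
  (exists l, Un_cv (fun N => sum_f_R0 (fun k => (gamma k)^2) N) l) /\
  (* (e)  indexed from k >= 1 *)
  Un_cv (fun k => / ((gamma k.+1)^2 * (lambda k.+1)^2) * (lambda k / lambda k.+1 - 1)^2) 0 /\
  Un_cv (fun k => gamma k / lambda k) 0.

(* Writing x*_k for the minimizer of
   f + lambda_k h over X, one outer iteration of IR-IG satisfies
     |x_{k+1} - x*_k|^2 <= (1 - gamma_k lambda_k mu) |x_k - x*_k|^2 + C gamma_k^2,
   while consecutive regularized minimizers satisfy
     |x*_k - x*_{k+1}| <= B (lambda_k / lambda_{k+1} - 1).
   A Young inequality turns these into a recursion
   a_{k+1} <= (1 - b_k) a_k + c_k for a_k = |x_{k+1} - x*_k|^2 with
   sum b_k = oo and sum c_k < oo under (A2), and a lemma of Polyak gives (a).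
   For (b), the regularization path x*_k is Cauchy when lambda_k decreases
   to 0; its limit minimizes f with h-value at most that of x_h*, so it equals
   x_h* by strong convexity of h, and (b) follows from (a). *)

From HB Require Import structures.
From Pilot Require Import Defs.
From mathcomp Require Import ssreflect ssrfun ssrbool eqtype ssrnat seq fintype bigop.
From Stdlib Require Import Reals Lra Psatz FunctionalExtensionality ClassicalEpsilon Classical.
Open Scope R_scope.

Lemma Rplus_associative : associative Rplus.
Proof. by move=> a b c; rewrite Rplus_assoc. Qed.
HB.instance Definition _ :=
  Monoid.isComLaw.Build R 0 Rplus Rplus_associative Rplus_comm Rplus_0_l.

Ltac vec_ring :=
  apply: functional_extensionality => ?; cbv beta delta [vsub vadd vscale]; ring.

Section EuclideanGeometry.
Context {n : nat}.
Implicit Types x y z : vec n.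

Lemma sum_scal (c : R) (F : 'I_n -> R) :
  \big[Rplus/0]_(i < n) (c * F i) = c * \big[Rplus/0]_(i < n) F i.
Proof.
apply: (big_ind2 (fun u v => u = c * v)) => [|a b u v -> ->|//]; ring.
Qed.

Lemma sum_ge0 (F : 'I_n -> R) : (forall i, 0 <= F i) -> 0 <= \big[Rplus/0]_(i < n) F i.
Proof. by move=> HF; elim/big_ind: _ => // *; lra. Qed.

Lemma dotC x y : dot x y = dot y x.
Proof. by apply: eq_bigr => i _; rewrite Rmult_comm. Qed.

Lemma dotDl x y z : dot (vadd x y) z = dot x z + dot y z.
Proof. by rewrite /dot -big_split; apply: eq_bigr => i _; rewrite /vadd /=; ring. Qed.

Lemma dotZl a x y : dot (vscale a x) y = a * dot x y.
Proof. by rewrite /dot -sum_scal; apply: eq_bigr => i _; rewrite /vscale /=; ring. Qed.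

Lemma dotBl x y z : dot (vsub x y) z = dot x z - dot y z.
Proof.
have -> : vsub x y = vadd x (vscale (-1) y) by vec_ring.
by rewrite dotDl dotZl; ring.
Qed.

Lemma dotDr x y z : dot z (vadd x y) = dot z x + dot z y.
Proof. by rewrite dotC dotDl !(dotC z). Qed.

Lemma dotBr x y z : dot z (vsub x y) = dot z x - dot z y.
Proof. by rewrite dotC dotBl !(dotC z). Qed.

Lemma dotZr a x y : dot y (vscale a x) = a * dot y x.
Proof. by rewrite dotC dotZl dotC. Qed.

Lemma dot_ge0 x : 0 <= dot x x.
Proof. by apply: sum_ge0 => i; apply: Rle_0_sqr. Qed.

Lemma dot_vsub_expand x y : dot (vsub x y) (vsub x y) = dot x x - 2 * dot x y + dot y y.
Proof. by rewrite !dotBl !dotBr (dotC y x); ring. Qed.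

Lemma dot_vadd_expand x y : dot (vadd x y) (vadd x y) = dot x x + 2 * dot x y + dot y y.
Proof. by rewrite !dotDl !dotDr (dotC y x); ring. Qed.

Lemma dot_vsubC x y : dot (vsub y x) (vsub y x) = dot (vsub x y) (vsub x y).
Proof. by rewrite !dot_vsub_expand (dotC y x); ring. Qed.

Lemma dot_vsub_swap g x y : dot g (vsub y x) = - dot (vsub x y) g.
Proof. by rewrite dotBr (dotC (vsub x y)) dotBr; ring. Qed.

Lemma coord_sq_le x (i : 'I_n) : x i * x i <= dot x x.
Proof.
rewrite /dot (bigD1 i) //=.
match goal with |- _ <= _ + ?rest => suff : 0 <= rest by lra end.
by elim/big_ind: _ => [|a b|j _]; [lra|lra|apply: Rle_0_sqr].
Qed.

Lemma dot_eq0 x : dot x x = 0 -> x = (fun _ => 0).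
Proof.
move=> H; apply: functional_extensionality => i.
have := coord_sq_le x i; rewrite H => Hi; apply: Rle_antisym; nra.
Qed.

(* Cauchy-Schwarz, in squared form: expand the squared norms of the
   combinations [C x - B y] and [x +- y] where B = <x,y>, C = |y|^2. *)
Lemma cauchy_schwarz_sq x y : dot x y * dot x y <= dot x x * dot y y.
Proof.
set A := dot x x; set B := dot x y; set C := dot y y.
have HA : 0 <= A := dot_ge0 x; have HC : 0 <= C := dot_ge0 y.
have H1 := dot_ge0 (vsub (vscale C x) (vscale B y)).
have H2 := dot_ge0 (vsub (vscale B x) (vscale A y)).
have H3 := dot_ge0 (vsub x y); have H4 := dot_ge0 (vadd x y).
rewrite !dot_vsub_expand ?dotZl ?dotZr ?(dotC y x) -/A -/B -/C in H1 H2 H3.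
rewrite dot_vadd_expand -/A -/B -/C in H4.
have [HAC|HAC] : A + C = 0 \/ 0 < A + C by lra.
- have -> : A = 0 by lra. have -> : C = 0 by lra. have -> : B = 0 by lra. lra.
- nra.
Qed.

Lemma vnorm_ge0 x : 0 <= vnorm x.
Proof. exact: sqrt_pos. Qed.

Lemma vnorm_sq x : vnorm x * vnorm x = dot x x.
Proof. by rewrite /vnorm sqrt_sqrt //; apply: dot_ge0. Qed.

Lemma vnorm_pow2 x : vnorm x ^ 2 = dot x x.
Proof. by rewrite /= Rmult_1_r vnorm_sq. Qed.

Lemma vnorm_le_of_dot x y : dot x x <= dot y y -> vnorm x <= vnorm y.
Proof. exact: sqrt_le_1_alt. Qed.

Lemma dot_le_of_vnorm x y : vnorm x <= vnorm y -> dot x x <= dot y y.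
Proof. by move=> H; rewrite -!vnorm_sq; have := vnorm_ge0 x; nra. Qed.

Lemma vnorm_le_of_dot_le x (c : R) : 0 <= c -> dot x x <= c * c -> vnorm x <= c.
Proof. by move=> Hc; rewrite -vnorm_sq; have := vnorm_ge0 x; nra. Qed.

Lemma coord_le_vnorm x (i : 'I_n) : Rabs (x i) <= vnorm x.
Proof.
rewrite /vnorm -sqrt_Rsqr_abs; apply: sqrt_le_1_alt; exact: coord_sq_le.
Qed.

Lemma dot_le_vnorm x y : dot x y <= vnorm x * vnorm y.
Proof.
have := cauchy_schwarz_sq x y; rewrite -!vnorm_sq.
have : 0 <= vnorm x * vnorm y by apply: Rmult_le_pos; apply: vnorm_ge0.
set p := vnorm x * vnorm y; have -> : vnorm x * vnorm x * (vnorm y * vnorm y) = p * p.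
  by rewrite /p; ring.
nra.
Qed.

Lemma vnorm_add_le x y : vnorm (vadd x y) <= vnorm x + vnorm y.
Proof.
apply: vnorm_le_of_dot_le; first by have := vnorm_ge0 x; have := vnorm_ge0 y; lra.
rewrite dot_vadd_expand -(vnorm_sq x) -(vnorm_sq y); have := dot_le_vnorm x y; lra.
Qed.

Lemma vnorm_scale a x : vnorm (vscale a x) = Rabs a * vnorm x.
Proof.
rewrite /vnorm dotZl dotZr -Rmult_assoc sqrt_mult; [|nra|apply: dot_ge0].
by change (a * a) with (Rsqr a); rewrite sqrt_Rsqr_abs.
Qed.

Lemma vnorm_triangle x y z : vnorm (vsub x z) <= vnorm (vsub x y) + vnorm (vsub y z).
Proof.
have -> : vsub x z = vadd (vsub x y) (vsub y z) by vec_ring.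
exact: vnorm_add_le.
Qed.

Lemma vnorm_subC x y : vnorm (vsub x y) = vnorm (vsub y x).
Proof. by rewrite /vnorm dot_vsubC. Qed.

Lemma vnorm_sub_le x y : vnorm (vsub x y) <= vnorm x + vnorm y.
Proof.
have -> : vsub x y = vadd x (vscale (-1) y) by vec_ring.
by rewrite -[vnorm y]Rmult_1_l -[1]Rabs_R1 -Rabs_Ropp -vnorm_scale; apply: vnorm_add_le.
Qed.

End EuclideanGeometry.

Definition cmb {n} (t : R) (x y : vec n) : vec n := vadd (vscale t x) (vscale (1 - t) y).

Lemma nonneg_of_perturbations (Q c : R) :
  (forall t, 0 < t <= 1 -> 0 <= Q + t * c) -> 0 <= Q.
Proof.
move=> H; apply: Rnot_lt_le => HQ.
have Hc := Rabs_pos c.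
set t := Rmin 1 (- Q / (2 * (Rabs c + 1))).
have Ht1 : t <= 1 := Rmin_l _ _.
have Ht2 : t <= - Q / (2 * (Rabs c + 1)) := Rmin_r _ _.
have Ht0 : 0 < t by apply: Rmin_glb_lt; [lra | apply: Rdiv_lt_0_compat; lra].
have Htc : t * c <= t * Rabs c by apply: Rmult_le_compat_l; [lra | apply: Rle_abs].
have HtQ : t * (2 * (Rabs c + 1)) <= - Q.
  have -> : - Q = - Q / (2 * (Rabs c + 1)) * (2 * (Rabs c + 1)) by field; lra.
  by apply: Rmult_le_compat_r; lra.
have := H t (conj Ht0 Ht1); nra.
Qed.

Section ConvexAnalysis.
Context {n : nat}.
Implicit Types x y z : vec n.

Lemma strongly_convex_convex (mu : R) (h : vec n -> R) :
  0 <= mu -> strongly_convex mu h -> convex_fun h.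
Proof.
move=> Hmu Hh x y t Ht; have := Hh x y t Ht; rewrite vnorm_pow2.
have := dot_ge0 (vsub x y).
have : 0 <= mu / 2 * t * (1 - t) by apply: Rmult_le_pos; [apply: Rmult_le_pos|]; lra.
move=> *; nra.
Qed.

Lemma fsum_convex (fi : nat -> vec n -> R) (j : nat) :
  (forall i, (1 <= i <= j)%nat -> convex_fun (fi i)) -> convex_fun (fsum j fi).
Proof.
elim: j => [|j IH] Hfi x y t Ht; first by rewrite /fsum !big_nil; lra.
rewrite /fsum !big_nat_recr //= -!/(fsum j fi _).
have := IH (fun i Hi => Hfi i ltac:(case/andP: Hi => -> Hi; exact: leqW)) x y t Ht.
have := Hfi j.+1 ltac:(by rewrite leqnn) x y t Ht; lra.
Qed.

Lemma argmin_convex (X : vec n -> Prop) (f : vec n -> R) :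
  convex_set X -> convex_fun f -> convex_set (is_argmin X f).
Proof.
move=> HX Hf x y t [Hx Hxmin] [Hy Hymin] Ht; split; first exact: HX.
move=> z Hz; have := Hf x y t Ht; have := Hxmin z Hz; have := Hymin z Hz; nra.
Qed.

Lemma strongly_convex_argmin_unique (mu : R) (h : vec n -> R) (S : vec n -> Prop) xh z :
  0 < mu -> strongly_convex mu h -> convex_set S -> is_argmin S h xh -> S z ->
  h z <= h xh -> z = xh.
Proof.
move=> Hmu Hh HS [Hxh Hmin] Hz Hle.
have Hmid := Hmin _ (HS z xh (1/2) Hz Hxh ltac:(lra)).
have := Hh z xh (1/2) ltac:(lra); rewrite vnorm_pow2 => Hconv.
have Hdot : dot (vsub z xh) (vsub z xh) = 0 by have := dot_ge0 (vsub z xh); nra.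
apply: functional_extensionality => i.
by have := f_equal (fun v => v i) (dot_eq0 _ Hdot); rewrite /vsub; lra.
Qed.

Lemma strongly_convex_subgrad (mu : R) (h : vec n -> R) x s :
  strongly_convex mu h -> subgrad h x s ->
  forall y, h x + dot s (vsub y x) + mu / 2 * dot (vsub y x) (vsub y x) <= h y.
Proof.
move=> Hh Hs y.
set v := vsub y x; set N := dot v v; set B := dot s v.
suff : 0 <= h y - h x - B - mu / 2 * N by lra.
apply: (nonneg_of_perturbations _ (mu / 2 * N)) => t [Ht0 Ht1].
have Hstep : vsub (cmb t y x) x = vscale t v by rewrite /cmb /v; vec_ring.
have Hsub := Hs (cmb t y x); rewrite Hstep dotZr -/B in Hsub.
have Hconv := Hh y x t (conj (Rlt_le _ _ Ht0) Ht1).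
rewrite vnorm_pow2 -/v -/N -/(cmb t y x) in Hconv.
suff : 0 <= t * (h y - h x - B - mu / 2 * N + t * (mu / 2 * N)).
  by move=> H; apply: (Rmult_le_reg_l t); lra.
nra.
Qed.

Lemma proj_variational (X : vec n -> Prop) z p y :
  convex_set X -> is_proj X z p -> X y -> dot (vsub z p) (vsub y p) <= 0.
Proof.
move=> HX [Hp Hmin] Hy.
set u := vsub z p; set v := vsub y p; set B := dot u v; set C := dot v v.
suff : 0 <= - 2 * B by lra.
apply: (nonneg_of_perturbations _ C) => t [Ht0 Ht1].
have Hw := HX y p t Hy Hp (conj (Rlt_le _ _ Ht0) Ht1).
have Hzw : vsub z (vadd (vscale t y) (vscale (1 - t) p)) = vsub u (vscale t v).
  by rewrite /u /v; vec_ring.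
have := dot_le_of_vnorm _ _ (Hmin _ Hw).
rewrite Hzw (dot_vsub_expand u) dotZr dotZl dotZr -/B -/C -/u; nra.
Qed.

Lemma proj_nonexpansive (X : vec n -> Prop) z p y :
  convex_set X -> is_proj X z p -> X y ->
  dot (vsub p y) (vsub p y) <= dot (vsub z y) (vsub z y).
Proof.
move=> HX Hp Hy; have Hvi := proj_variational _ _ _ _ HX Hp Hy.
have -> : vsub z y = vadd (vsub z p) (vsub p y) by vec_ring.
rewrite dot_vadd_expand.
have : dot (vsub z p) (vsub p y) = - dot (vsub z p) (vsub y p) by rewrite !dotBr; ring.
have := dot_ge0 (vsub z p); lra.
Qed.

(* A convex function on R^n is bounded on bounded sets.  We first bound it
   on the cube [-r, r]^n: replacing coordinates one at a time by +-r does not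
   decrease f (convexity along a coordinate segment), and f is bounded on the
   finitely many vertices. *)
Definition upd x (j : nat) (v : R) : vec n :=
  fun i => if nat_of_ord i == j then v else x i.

Definition in_cube (r : R) x : Prop := forall i, Rabs (x i) <= r.

Definition vertex_upto (r : R) (j : nat) x : Prop :=
  forall i : 'I_n, (i < j)%nat -> x i = r \/ x i = - r.

Lemma upd_in_cube r j x v : in_cube r x -> Rabs v <= r -> in_cube r (upd x j v).
Proof. by move=> Hx Hv i; rewrite /upd; case: eqP. Qed.

Lemma upd_vertex_upto r j x v :
  vertex_upto r j x -> v = r \/ v = - r -> vertex_upto r j.+1 (upd x j v).
Proof.
move=> Hx Hv i Hi; rewrite /upd; case: eqP => Hij //.
by apply: Hx; rewrite ltnS leq_eqVlt in Hi; case/orP: Hi => // /eqP.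
Qed.

Lemma cube_coord_split r (J : 'I_n) x : 0 < r -> Rabs (x J) <= r ->
  exists t, 0 <= t <= 1 /\ x = cmb t (upd x J r) (upd x J (- r)).
Proof.
move=> Hr HxJ.
have HJ : - r <= x J <= r.
  by have := Rle_abs (x J); have := Rle_abs (- x J); rewrite Rabs_Ropp; lra.
exists ((x J + r) / (2 * r)); split.
  split; first by apply: Rmult_le_pos; [lra | apply: Rlt_le; apply: Rinv_0_lt_compat; lra].
  by apply: (Rmult_le_reg_r (2 * r)); [lra | rewrite /Rdiv Rmult_assoc Rinv_l; lra].
apply: functional_extensionality => i; rewrite /cmb /vadd /vscale /upd.
case: eqP => Hij; last by ring.
have -> : i = J by apply: val_inj.
by field; lra.
Qed.

Lemma convex_push_to_vertex (f : vec n -> R) r : convex_fun f -> 0 < r ->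
  forall j x, in_cube r x -> exists y, in_cube r y /\ vertex_upto r j y /\ f x <= f y.
Proof.
move=> Hf Hr; elim=> [|j IH] x Hx.
  by exists x; split => //; split => [i|]; [rewrite ltn0 | lra].
have [y [Hy [Hyj Hfy]]] := IH x Hx.
case: (ltnP j n) => Hjn; last first.
  exists y; split => //; split => // i Hi; apply: Hyj; exact: leq_trans (ltn_ord i) Hjn.
set J : 'I_n := Ordinal Hjn.
have Hrr : Rabs r <= r by rewrite Rabs_right; lra.
have Hrl : Rabs (- r) <= r by rewrite Rabs_Ropp Rabs_right; lra.
have [t [Ht Hsplit]] := cube_coord_split r J y Hr (Hy J).
have Hc := Hf (upd y J r) (upd y J (- r)) t Ht.
rewrite -/(cmb t (upd y J r) (upd y J (- r))) -Hsplit in Hc.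
case: (Rle_lt_dec (f (upd y J (- r))) (f (upd y J r))) => Hcmp.
- exists (upd y J r); split; first exact: upd_in_cube.
  by split; [apply: upd_vertex_upto => //; left | nra].
- exists (upd y J (- r)); split; first exact: upd_in_cube.
  by split; [apply: upd_vertex_upto => //; right | nra].
Qed.

Lemma vertex_decomp r j y : vertex_upto r j.+1 y ->
  y = upd (upd y j 0) j r \/ y = upd (upd y j 0) j (- r).
Proof.
move=> Hy.
have Hupd v : upd (upd y j 0) j v = upd y j v.
  by apply: functional_extensionality => i; rewrite /upd; case: eqP.
rewrite !Hupd; case: (ltnP j n) => Hjn.
  have [Hv|Hv] := Hy (Ordinal Hjn) (ltnSn j); [left|right];
    apply: functional_extensionality => i; rewrite /upd; case: eqP => // Hij;
    by rewrite -Hv; congr y; apply: val_inj.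
left; apply: functional_extensionality => i; rewrite /upd; case: eqP => // Hij.
by move: (ltn_ord i); rewrite Hij ltnNge Hjn.
Qed.

Lemma bounded_on_vertices r j : forall g : vec n -> R, exists M, forall y,
  vertex_upto r j y -> (forall i : 'I_n, (j <= i)%nat -> y i = 0) -> g y <= M.
Proof.
elim: j => [|j IH] g.
  exists (g (fun _ => 0)) => y _ Hy0.
  have -> : y = (fun _ => 0) by apply: functional_extensionality => i; apply: Hy0.
  exact: Rle_refl.
have [M HM] := IH (fun y => Rmax (g (upd y j r)) (g (upd y j (- r)))).
exists M => y Hy Hy0; apply: Rle_trans (HM (upd y j 0) _ _).
- by case: (vertex_decomp r j y Hy) => {1}->; [apply: Rmax_l | apply: Rmax_r].
- move=> i Hi; rewrite /upd; case: eqP => Hij; first by move: Hi; rewrite Hij ltnn.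
  exact/Hy/ltnW.
- move=> i Hi; rewrite /upd; case: eqP => Hij //.
  by apply: Hy0; rewrite ltn_neqAle Hi andbT; apply/eqP => Hji; apply: Hij.
Qed.

Lemma convex_bounded_on_cube (f : vec n -> R) r : convex_fun f -> 0 < r ->
  exists K, forall x, in_cube r x -> Rabs (f x) <= K.
Proof.
move=> Hf Hr; have [M HM] := bounded_on_vertices r n f.
have Hub x : in_cube r x -> f x <= M.
  move=> Hx; have [y [_ [Hy Hfy]]] := convex_push_to_vertex f r Hf Hr n x Hx.
  apply: Rle_trans Hfy (HM y Hy _) => i; by rewrite leqNgt ltn_ord.
exists (Rmax M (M - 2 * f (fun _ => 0))) => x Hx.
have Hnx : in_cube r (vscale (-1) x).
  by move=> i; rewrite /vscale -Ropp_mult_distr_l Rmult_1_l Rabs_Ropp.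
(* the origin is the midpoint of x and -x *)
have Hmid := Hf x (vscale (-1) x) (1/2) ltac:(lra).
have Hzero : vadd (vscale (1 / 2) x) (vscale (1 - 1 / 2) (vscale (-1) x)) = (fun _ => 0).
  by apply: functional_extensionality => i; rewrite /vadd /vscale; field.
rewrite Hzero in Hmid; have := Hub x Hx; have := Hub _ Hnx.
have := Rmax_l M (M - 2 * f (fun _ => 0)); have := Rmax_r M (M - 2 * f (fun _ => 0)).
move=> *; apply: Rabs_le; lra.
Qed.

Lemma convex_bounded_on_ball (f : vec n -> R) r : convex_fun f ->
  exists K, 0 <= K /\ forall x, vnorm x <= r -> Rabs (f x) <= K.
Proof.
move=> Hf; have Hr := Rabs_pos r.
have [K HK] := convex_bounded_on_cube f (Rabs r + 1) Hf ltac:(lra).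
exists (Rmax K 0); split; first exact: Rmax_r.
move=> x Hx; apply: Rle_trans (Rmax_l _ _); apply: HK => i.
have := coord_le_vnorm x i; have := Rle_abs r; lra.
Qed.

(* A convex function bounded by K on the ball of radius r + 1 is
   2K-Lipschitz on the ball of radius r: extend the segment [a, b] beyond b
   by a unit length and use convexity on the extended segment. *)
Lemma convex_lipschitz (f : vec n -> R) r K : convex_fun f -> 0 <= K ->
  (forall x, vnorm x <= r + 1 -> Rabs (f x) <= K) ->
  forall a b, vnorm a <= r -> vnorm b <= r -> f b - f a <= 2 * K * vnorm (vsub b a).
Proof.
move=> Hf HK Hbnd a b Ha Hb.
set d := vnorm (vsub b a).
have [Hd|Hd] : d = 0 \/ 0 < d by have := vnorm_ge0 (vsub b a); rewrite -/d; lra.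
  have Hba := dot_eq0 (vsub b a) ltac:(by rewrite -vnorm_sq -/d Hd Rmult_0_l).
  have -> : b = a.
    by apply: functional_extensionality => i; have := f_equal (fun v => v i) Hba; rewrite /vsub; lra.
  by rewrite Hd; lra.
set c := vadd b (vscale (/ d) (vsub b a)).
have Hc : vnorm c <= r + 1.
  apply: Rle_trans (vnorm_add_le _ _) _.
  rewrite vnorm_scale Rabs_right; last by apply/Rle_ge/Rlt_le/Rinv_0_lt_compat.
  by rewrite -/d Rinv_l; lra.
set t := d / (1 + d).
have Ht : 0 <= t <= 1 /\ t <= d.
  have Hdiv : t * (1 + d) = d by rewrite /t; field; lra.
  split; [split|]; apply: (Rmult_le_reg_r (1 + d)); rewrite ?Hdiv; nra.
have Hb_split : vadd (vscale t c) (vscale (1 - t) a) = b.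
  by apply: functional_extensionality => i; rewrite /vadd /vscale /c /t /vadd /vscale /vsub; field; lra.
have Hconv := Hf c a t (proj1 Ht); rewrite Hb_split in Hconv.
have Hfc := Hbnd c Hc; have Hfa := Hbnd a ltac:(lra).
have := Rle_abs (f c); have := Rle_abs (- f a); rewrite Rabs_Ropp; nra.
Qed.

Lemma subgrad_bounded (f : vec n -> R) r K x g : 0 <= K ->
  (forall x, vnorm x <= r + 1 -> Rabs (f x) <= K) -> vnorm x <= r ->
  subgrad f x g -> vnorm g <= 2 * K.
Proof.
move=> HK Hbnd Hx Hg.
set d := vnorm g.
have [Hd|Hd] : d = 0 \/ 0 < d by have := vnorm_ge0 g; rewrite -/d; lra.
  by rewrite Hd; lra.
set y := vadd x (vscale (/ d) g).
have Hy : vnorm y <= r + 1.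
  apply: Rle_trans (vnorm_add_le _ _) _.
  rewrite vnorm_scale Rabs_right; last by apply/Rle_ge/Rlt_le/Rinv_0_lt_compat.
  by rewrite -/d Rinv_l; lra.
have Hyx : vsub y x = vscale (/ d) g by rewrite /y; vec_ring.
have := Hg y; rewrite Hyx dotZr -vnorm_sq -/d.
have -> : / d * (d * d) = d by field; lra.
have := Hbnd y Hy; have := Hbnd x ltac:(lra).
have := Rle_abs (f y); have := Rle_abs (- f x); rewrite Rabs_Ropp; lra.
Qed.

End ConvexAnalysis.

Lemma cv_const (c : R) : Un_cv (fun _ => c) c.
Proof. by move=> e He; exists 0%nat => k _; rewrite /Rdist Rminus_diag Rabs_R0. Qed.

Lemma cv_scal0 (u : nat -> R) (c : R) : Un_cv u 0 -> Un_cv (fun k => c * u k) 0.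
Proof. by move=> Hu; have := CV_mult _ _ _ _ (cv_const c) Hu; rewrite Rmult_0_r. Qed.

Lemma cv_plus0 (u v : nat -> R) : Un_cv u 0 -> Un_cv v 0 -> Un_cv (fun k => u k + v k) 0.
Proof. by move=> Hu Hv; have := CV_plus _ _ _ _ Hu Hv; rewrite Rplus_0_r. Qed.

Lemma cv_ext (u v : nat -> R) l : (forall k, u k = v k) -> Un_cv u l -> Un_cv v l.
Proof. by move=> Huv; have -> : u = v by apply: functional_extensionality. Qed.

Lemma cv_inv_succ : Un_cv (fun k => / (INR k + 1)) 0.
Proof.
move=> eps Heps; have [N [HN HN0]] := archimed_cor1 eps Heps.
have HN0' : 0 < INR N := lt_0_INR _ HN0.
exists N => k Hk; have Hk' : INR N <= INR k := le_INR _ _ Hk.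
rewrite /R_dist Rminus_0_r Rabs_right; last by apply/Rle_ge/Rlt_le/Rinv_0_lt_compat; lra.
by apply: Rle_lt_trans HN; apply: Rinv_le_contravar; lra.
Qed.

Lemma cv_squeeze0 (u v : nat -> R) : (forall k, 0 <= u k <= v k) -> Un_cv v 0 -> Un_cv u 0.
Proof.
move=> H Hv eps Heps; have [N HN] := Hv eps Heps; exists N => k Hk.
have := HN k Hk; have := H k; rewrite /R_dist !Rminus_0_r => -[H1 H2].
by rewrite !Rabs_right; lra.
Qed.

Lemma cv_sqrt0 (u : nat -> R) : (forall k, 0 <= u k) -> Un_cv (fun k => u k * u k) 0 -> Un_cv u 0.
Proof.
move=> H0 H eps Heps; have [N HN] := H (eps * eps) ltac:(nra).
exists N => k Hk; have := HN k Hk; have := H0 k.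
by rewrite /R_dist !Rminus_0_r => Hk0; rewrite !Rabs_right; try (apply: Rle_ge); nra.
Qed.

Lemma le_of_cv0 (A B : R) (u : nat -> R) : Un_cv u 0 -> (forall k, A <= B + u k) -> A <= B.
Proof.
move=> Hu H; apply: Rnot_lt_le => Hlt.
have [N HN] := Hu (A - B) ltac:(lra).
have := HN N (le_n _); rewrite /R_dist Rminus_0_r.
have := H N; have := Rle_abs (u N); lra.
Qed.

Lemma sum_shift (u : nat -> R) N : sum_f_R0 (fun k => u (S k)) N = sum_f_R0 u (S N) - u 0%nat.
Proof. by elim: N => [|N IH] /=; [ring | rewrite IH /=; ring]. Qed.

Fixpoint psum (u : nat -> R) (k : nat) : R :=
  match k with O => 0 | S k' => psum u k' + u k' end.

Lemma psum_sum u N : psum u (S N) = sum_f_R0 u N.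
Proof. by elim: N => [|N IH] /=; [ring | rewrite -IH]. Qed.

Lemma psum_ge0 u : (forall k, 0 <= u k) -> forall k, 0 <= psum u k.
Proof. by move=> H; elim=> [|k IH] /=; [lra | have := H k; lra]. Qed.

Lemma psum_cv u l : Un_cv (sum_f_R0 u) l -> Un_cv (psum u) l.
Proof.
move=> H eps Heps; have [N HN] := H eps Heps; exists (S N) => k Hk.
have -> : k = S (Nat.pred k) by lia.
by rewrite psum_sum; apply: HN; lia.
Qed.

Lemma psum_le_lim u l : (forall k, 0 <= u k) -> Un_cv (psum u) l -> forall k, psum u k <= l.
Proof. by move=> H Hc k; apply: growing_ineq => // j /=; have := H j; lra. Qed.

Section Polyak.
Variables (a b c : nat -> R) (l : R).
Hypotheses (Ha : forall k, 0 <= a k) (Hb : forall k, 0 <= b k) (Hc : forall k, 0 <= c k)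
  (Hrec : forall k, a (S k) <= (1 - b k) * a k + c k)
  (Hbinf : cv_infty (sum_f_R0 b)) (Hcl : Un_cv (sum_f_R0 c) l).

Lemma polyak_unroll eps K : (forall j, (K <= j)%nat -> eps <= a j) ->
  forall p, a (K + p)%nat <= a K + (psum c (K + p) - psum c K)
                           - eps * (psum b (K + p) - psum b K).
Proof.
move=> Heps; elim=> [|p IH]; first by rewrite addn0; lra.
rewrite addnS /=; have := Hrec (K + p)%nat; have := Heps (K + p)%nat (leq_addr _ _).
have := Hb (K + p)%nat; nra.
Qed.

Lemma polyak_unroll0 K p : a (K + p)%nat <= a K + (psum c (K + p) - psum c K).
Proof.
have := polyak_unroll 0 K (fun j _ => Ha j) p; lra.
Qed.

(* The sequence gets below any eps > 0 infinitely often: otherwise the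
   divergence of sum b would drive it negative. *)
Lemma polyak_often_small eps : 0 < eps -> forall K, exists k, (K <= k)%nat /\ a k < eps.
Proof.
move=> Heps K; apply: NNPP => Hnone.
have HK : forall j, (K <= j)%nat -> eps <= a j.
  by move=> j Hj; apply: Rnot_lt_le => Hlt; apply: Hnone; exists j.
have Hcle := psum_le_lim c l Hc (psum_cv c l Hcl).
have [N HN] := Hbinf (psum b K + (a K + l + 1) / eps).
set N' := maxn N K.
have HN' := HN N' ltac:(apply/leP; apply: leq_maxl).
have E : S N' = (K + (S N' - K))%nat by rewrite subnKC //; apply/leqW/leq_maxr.
have := polyak_unroll eps K HK (S N' - K)%nat; rewrite -E psum_sum.
have := Ha (S N'); have := Hcle (S N'); have := psum_ge0 c Hc K.
have Hmul : eps * ((a K + l + 1) / eps) = a K + l + 1 by field; lra.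
have : eps * ((a K + l + 1) / eps) < eps * (sum_f_R0 b N' - psum b K).
  by apply: Rmult_lt_compat_l; lra.
rewrite !psum_sum; lra.
Qed.

Lemma polyak : Un_cv a 0.
Proof.
move=> eps Heps.
have Hpc := psum_cv c l Hcl.
have [K HK] := Hpc (eps / 2) ltac:(lra).
have [k0 [Hk0 Hak0]] := polyak_often_small (eps / 2) ltac:(lra) K.
exists k0 => j /leP Hj.
have E : j = (k0 + (j - k0))%nat by rewrite subnKC.
rewrite /R_dist Rminus_0_r Rabs_right; last exact/Rle_ge.
have Htail : psum c (k0 + (j - k0)) - psum c k0 < eps / 2.
  have := HK k0 ltac:(apply/leP; exact: Hk0); rewrite /R_dist => Hdist.
  have := psum_le_lim c l Hc Hpc (k0 + (j - k0))%nat.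
  have := Rle_abs (psum c k0 - l); have := Rle_abs (- (psum c k0 - l)); rewrite Rabs_Ropp; lra.
rewrite E; have := polyak_unroll0 k0 (j - k0)%nat; lra.
Qed.

End Polyak.

Section Minimizers.
Context {n : nat}.
Implicit Types x y : vec n.

Lemma sum_le_const (F : 'I_n -> R) (c : R) : (forall i, F i <= c) ->
  \big[Rplus/0]_(i < n) F i <= INR n * c.
Proof.
move=> H; apply: Rle_trans (_ : \big[Rplus/0]_(i < n) c <= _).
  by elim/big_ind2: _ => [|a b a' b'|i _]; [lra | lra | exact: H].
rewrite big_const_ord; elim: n {F H} => [|k IH]; first by rewrite /=; lra.
by rewrite iterS S_INR; lra.
Qed.

Lemma eventually_all_coords (P : nat -> 'I_n -> Prop) :
  (forall i, exists N, forall k, (N <= k)%nat -> P k i) ->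
  exists N, forall i k, (N <= k)%nat -> P k i.
Proof.
move=> H.
suff /(_ n) [N HN] : forall j : nat, exists N,
    forall i : 'I_n, (i < j)%nat -> forall k, (N <= k)%nat -> P k i.
  by exists N => i k Hk; exact: HN (ltn_ord i) k Hk.
elim=> [|j [N IH]]; first by exists 0%nat => i; rewrite ltn0.
case: (ltnP j n) => Hjn; last first.
  by exists N => i Hi; apply: IH; exact: leq_trans (ltn_ord i) Hjn.
have [N' HN'] := H (Ordinal Hjn).
exists (maxn N N') => i Hi k Hk.
rewrite ltnS leq_eqVlt in Hi; case/orP: Hi => Hi.
  have -> : i = Ordinal Hjn by apply: val_inj; apply/eqP.
  by apply: HN'; exact: leq_trans (leq_maxr _ _) Hk.
by apply: IH => //; exact: leq_trans (leq_maxl _ _) Hk.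
Qed.

Lemma vec_complete (u : nat -> vec n) :
  (forall eps, 0 < eps -> exists N, forall j k, (N <= j)%nat -> (N <= k)%nat ->
     vnorm (vsub (u j) (u k)) < eps) ->
  exists l, Un_cv (fun k => vnorm (vsub (u k) l)) 0.
Proof.
move=> HC.
have HCi : forall i, Cauchy_crit (fun k => u k i).
  move=> i eps Heps; have [N HN] := HC eps Heps; exists N => j k /leP Hj /leP Hk.
  exact: Rle_lt_trans (coord_le_vnorm (vsub (u j) (u k)) i) (HN j k Hj Hk).
set l := fun i => proj1_sig (R_complete _ (HCi i)).
have Hl : forall i, Un_cv (fun k => u k i) (l i).
  by move=> i; rewrite /l; case: (R_complete _ _).
exists l => eps Heps.
set d := eps / (2 * (INR n + 1)).
have Hn0 := pos_INR n.
have Hd : 0 < d by apply: Rdiv_lt_0_compat; lra.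
have [N HN] : exists N, forall i k, (N <= k)%nat -> Rabs (u k i - l i) < d.
  apply: eventually_all_coords => i; have [N HN] := Hl i d Hd.
  by exists N => k /leP Hk; apply: HN.
exists N => k /leP Hk; rewrite /R_dist Rminus_0_r Rabs_right; last exact/Rle_ge/vnorm_ge0.
apply: Rle_lt_trans (_ : eps / 2 < eps); last lra.
apply: vnorm_le_of_dot_le; first lra.
apply: Rle_trans (sum_le_const _ (d * d) _) _.
  move=> i; have := HN i k Hk; rewrite /vsub => Hi.
  have := Rle_abs (u k i - l i); have := Rle_abs (- (u k i - l i)); rewrite Rabs_Ropp; nra.
have -> : eps / 2 = d * (INR n + 1) by rewrite /d; field; lra.
nra.
Qed.

Lemma approx_infimum (X : vec n -> Prop) (F : vec n -> R) (lb : R) :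
  (exists x, X x) -> (forall x, X x -> lb <= F x) ->
  exists I (xs : nat -> vec n), (forall x, X x -> I <= F x) /\
    forall k, X (xs k) /\ F (xs k) < I + / (INR k + 1).
Proof.
move=> [x0 Hx0] Hlb.
set E := fun v => exists x, X x /\ v = - F x.
have HEb : bound E by exists (- lb) => v [x [Hx ->]]; have := Hlb x Hx; lra.
have [sup [Hub Hleast]] := completeness E HEb (ex_intro _ (- F x0) (ex_intro _ x0 (conj Hx0 erefl))).
have Hinf : forall x, X x -> - sup <= F x.
  by move=> x Hx; have := Hub (- F x) (ex_intro _ x (conj Hx erefl)); lra.
have Happ : forall k : nat, exists x, X x /\ F x < - sup + / (INR k + 1).
  move=> k; apply: NNPP => Hnone.
  have Hk : 0 < / (INR k + 1) by apply: Rinv_0_lt_compat; have := pos_INR k; lra.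
  suff : sup <= sup - / (INR k + 1) by lra.
  apply: Hleast => v [x [Hx ->]]; apply: Rnot_lt_le => Hlt.
  by apply: Hnone; exists x; split => //; lra.
exists (- sup), (fun k => proj1_sig (constructive_indefinite_description _ (Happ k))).
by split => // k; case: (constructive_indefinite_description _ _).
Qed.

(* A continuous (Lipschitz) function that is bounded below and uniformly
   convex at midpoints attains its infimum on a nonempty closed convex set:
   approximate minimizers form a Cauchy sequence. *)
Lemma exists_minimizer (X : vec n -> Prop) (F : vec n -> R) (L nu lb : R) :
  Defs.closed_set X -> convex_set X -> (exists x, X x) -> 0 < nu ->
  (forall a b, X a -> X b -> F a - F b <= L * vnorm (vsub a b)) ->
  (forall a b, X a -> X b ->
     F (cmb (1/2) a b) <= F a / 2 + F b / 2 - nu * dot (vsub a b) (vsub a b)) ->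
  (forall x, X x -> lb <= F x) ->
  exists z, is_argmin X F z.
Proof.
move=> Hcl Hcv Hne Hnu HL Hmid Hlb.
have [I [xs [Hinf Hxs]]] := approx_infimum X F lb Hne Hlb.
have Hcauchy : forall eps, 0 < eps -> exists N, forall j k, (N <= j)%nat -> (N <= k)%nat ->
     vnorm (vsub (xs j) (xs k)) < eps.
  move=> eps Heps.
  have [N HN] := cv_inv_succ (nu * ((eps / 2) * (eps / 2))) ltac:(apply: Rmult_lt_0_compat; nra).
  have Hsmall k : (N <= k)%nat -> / (INR k + 1) < nu * ((eps / 2) * (eps / 2)).
    move=> /leP Hk; have := HN k Hk; rewrite /R_dist Rminus_0_r Rabs_right //.
    by apply/Rle_ge/Rlt_le/Rinv_0_lt_compat; have := pos_INR k; lra.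
  exists N => j k Hj Hk.
  have [Xj Fj] := Hxs j; have [Xk Fk] := Hxs k.
  have Hmj := Hmid _ _ Xj Xk.
  have Hmi := Hinf _ (Hcv (xs j) (xs k) (1/2) Xj Xk ltac:(lra)).
  apply: Rle_lt_trans (_ : eps / 2 < eps); last lra.
  apply: vnorm_le_of_dot_le; first lra.
  apply: (Rmult_le_reg_l nu) => //.
  have := Hsmall j Hj; have := Hsmall k Hk; rewrite /cmb in Hmj; lra.
have [z Hz] := vec_complete xs Hcauchy.
have HXz : X z := Hcl xs z (fun k => proj1 (Hxs k)) Hz.
exists z; split => // y Hy; apply: Rle_trans (Hinf y Hy).
apply: (le_of_cv0 _ _ (fun k => / (INR k + 1) + L * vnorm (vsub (xs k) z))).
  by apply: cv_plus0; [exact: cv_inv_succ | exact: cv_scal0].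
move=> k; have [Xk Fk] := Hxs k; have := HL _ _ HXz Xk; rewrite vnorm_subC; lra.
Qed.

End Minimizers.

Lemma convex_family_bounded {n} (F : nat -> vec n -> R) (r : R) (m : nat) :
  (forall i, (1 <= i <= m)%nat -> convex_fun (F i)) ->
  exists K, 0 <= K /\ forall i, (1 <= i <= m)%nat -> forall x, vnorm x <= r -> Rabs (F i x) <= K.
Proof.
elim: m => [|m IH] HF.
  by exists 0; split => [|i /andP [H1 H2]]; [lra | move: (leq_trans H1 H2)].
have [K [HK0 HK]] := IH (fun i Hi => HF i ltac:(case/andP: Hi => -> Hi; exact: leqW)).
have [K' [HK'0 HK']] := convex_bounded_on_ball (F m.+1) r (HF m.+1 ltac:(by rewrite leqnn)).
exists (Rmax K K'); split; first exact: Rle_trans (Rmax_l _ _).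
move=> i /andP [H1 H2] x Hx; rewrite leq_eqVlt in H2; case/orP: H2 => H2.
  by move/eqP: H2 => ->; apply: Rle_trans (HK' x Hx) (Rmax_r _ _).
by apply: Rle_trans (HK i _ x Hx) (Rmax_l _ _); rewrite H1.
Qed.

(* Young-type inequality used to absorb the drift of the regularized
   minimizers: (1 - p)(e + u)^2 <= (1 - p/2) e^2 + (2/p) u^2 for 0 < p <= 1. *)
Lemma young_shift (p e u : R) : 0 < p <= 1 ->
  (1 - p) * ((e + u) * (e + u)) <= (1 - p / 2) * (e * e) + 2 / p * (u * u).
Proof.
move=> [Hp0 Hp1].
have Hcross : 2 * e * u <= p / 2 * (e * e) + 2 / p * (u * u).
  have : 0 <= / p * ((p * e - 2 * u) * (p * e - 2 * u)).
    by apply: Rmult_le_pos; [apply/Rlt_le/Rinv_0_lt_compat | apply: Rle_0_sqr].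
  have -> : / p * ((p * e - 2 * u) * (p * e - 2 * u))
            = 2 * (p / 2 * (e * e) + 2 / p * (u * u) - 2 * e * u) by field; lra.
  lra.
have : 0 <= p * (e * e) by apply: Rmult_le_pos; nra.
have : p * (2 / p * (u * u)) = 2 * (u * u) by field; lra.
have : 0 <= 2 / p * (u * u) by apply: Rmult_le_pos; [apply: Rmult_le_pos; [lra | apply/Rlt_le/Rinv_0_lt_compat] | nra].
nra.
Qed.

Section IRIG.
Variables (n m : nat) (X : vec n -> Prop) (fi : nat -> vec n -> R) (h : vec n -> R) (mu : R).
Hypotheses (HXne : exists x, X x) (HXcpt : compact_set X) (HXcvx : convex_set X)
  (Hfi : forall i, (1 <= i <= m)%nat -> convex_fun (fi i))
  (Hmu : 0 < mu) (Hh : strongly_convex mu h).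
Variables (gamma lambda : nat -> R).
Hypothesis (HA2 : assumption_A2 m mu gamma lambda).
Variables (xk : nat -> vec n) (xin : nat -> nat -> vec n) (gf gh : nat -> nat -> vec n).
Hypothesis (Hit : IRIG X m fi h gamma lambda xk xin gf gh).

Definition Freg (k : nat) (x : vec n) : R := fsum m fi x + lambda k * h x.

Lemma gamma_pos k : 0 < gamma k.
Proof. by case: HA2 => H _; case: (H k). Qed.

Lemma lambda_pos k : 0 < lambda k.
Proof. by case: HA2 => H _; case: (H k). Qed.

Lemma lambda_antitone j k : (j <= k)%nat -> lambda k <= lambda j.
Proof.
case: HA2 => _ [Hmono _]; elim: k => [|k IH] Hjk.
  by move: Hjk; rewrite leqn0 => /eqP ->; lra.
rewrite leq_eqVlt in Hjk; case/orP: Hjk => [/eqP -> | Hjk]; first lra.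
by have := IH Hjk; have [_ Hk] := Hmono k; lra.
Qed.

Lemma gamma_antitone k : gamma k <= gamma 0%nat.
Proof.
case: HA2 => _ [Hmono _]; elim: k => [|k IH]; first lra.
by have [Hk _] := Hmono k; lra.
Qed.

(* (A2a) forces m >= 1, since gamma_0 lambda_0 > 0. *)
Lemma m_ge1 : 1 <= INR m.
Proof.
case: HA2 => _ [_ [H _]]; have := Rmult_lt_0_compat _ _ (gamma_pos 0) (lambda_pos 0).
have [Hm0|Hm0] := posnP m.
  by rewrite Hm0 /= Rmult_0_r /Rdiv Rmult_0_l in H; lra.
by move=> _; apply: (le_INR 1); apply/leP.
Qed.

(* The contraction factor of one outer iteration is at most 1:
   gamma_k lambda_k mu <= 2 m, by (A2a) and monotonicity. *)
Lemma contraction_le k : gamma k * lambda k * mu <= 2 * INR m.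
Proof.
case: HA2 => _ [_ [H _]].
have Hgl : gamma k * lambda k <= gamma 0%nat * lambda 0%nat.
  apply: Rmult_le_compat; [exact/Rlt_le/gamma_pos | exact/Rlt_le/lambda_pos | |];
    [exact: gamma_antitone | exact: lambda_antitone].
have -> : 2 * INR m = 2 * INR m / mu * mu by field; lra.
by apply: Rmult_le_compat_r; lra.
Qed.

Lemma inner_stays_in_X k : X (xk k) -> forall i, (i <= m)%nat -> X (xin k i).
Proof.
case: Hit => _ /(_ k) [H0 [Hstep _]] Hx; elim=> [|i IH] Hi; first by rewrite H0.
by have [_ [_ [Hp _]]] := Hstep i Hi.
Qed.

Lemma iterate_in_X k : X (xk k).
Proof.
elim: k => [|k IH]; first by case: Hit.
by case: Hit => _ /(_ k) [_ [_ ->]]; apply: inner_stays_in_X.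
Qed.

Lemma inner_in_X k i : (i <= m)%nat -> X (xin k i).
Proof. exact: inner_stays_in_X (iterate_in_X k) i. Qed.

Lemma X_bounded : exists D, 0 <= D /\ forall x, X x -> vnorm x <= D.
Proof.
case: HXcpt => _ [M HM]; exists (Rmax M 0); split; first exact: Rmax_r.
by move=> x Hx; apply: Rle_trans (HM x Hx) (Rmax_l _ _).
Qed.

Lemma functions_bounded r : exists K, 0 <= K /\
  (forall i, (1 <= i <= m)%nat -> forall x, vnorm x <= r -> Rabs (fi i x) <= K) /\
  (forall x, vnorm x <= r -> Rabs (h x) <= K) /\
  (forall x, vnorm x <= r -> Rabs (fsum m fi x) <= K).
Proof.
have [Kf [HKf0 HKf]] := convex_family_bounded fi r m Hfi.
have [Kh [HKh0 HKh]] :=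
  convex_bounded_on_ball h r (strongly_convex_convex mu h (Rlt_le _ _ Hmu) Hh).
have [Ks [HKs0 HKs]] := convex_bounded_on_ball (fsum m fi) r (fsum_convex fi m Hfi).
exists (Rmax Kf (Rmax Kh Ks)); split; first exact: Rle_trans (Rmax_l _ _).
have Hh' := Rmax_l Kh Ks; have Hs' := Rmax_r Kh Ks; have := Rmax_r Kf (Rmax Kh Ks).
move=> HKm; split; first by move=> i Hi x Hx; apply: Rle_trans (HKf i Hi x Hx) (Rmax_l _ _).
by split => x Hx; [have := HKh x Hx | have := HKs x Hx]; lra.
Qed.

Section Estimates.
Variables (D K : R).
Hypotheses (HD0 : 0 <= D) (HDX : forall x, X x -> vnorm x <= D) (HK0 : 0 <= K)
  (HKf : forall i, (1 <= i <= m)%nat -> forall x, vnorm x <= D + 1 -> Rabs (fi i x) <= K)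
  (HKh : forall x, vnorm x <= D + 1 -> Rabs (h x) <= K)
  (HKs : forall x, vnorm x <= D + 1 -> Rabs (fsum m fi x) <= K).

(* G is a Lipschitz constant on X and a subgradient bound; Gd bounds the
   search directions; Ec collects the second-order errors of one iteration. *)
Let G := 2 * K.
Let Gd := G + lambda 0%nat * G.
Let Ec := Gd * Gd + 2 * INR m * Gd * (Gd + 2 * lambda 0%nat * mu * D).

Lemma G_ge0 : 0 <= G. Proof. rewrite /G; lra. Qed.

Lemma Gd_ge0 : 0 <= Gd.
Proof. by have := lambda_pos 0; rewrite /Gd /G; nra. Qed.

Lemma Ec_ge0 : 0 <= Ec.
Proof.
have Hm := m_ge1; have HGd := Gd_ge0; have Hl := lambda_pos 0.
have : 0 <= lambda 0%nat * mu * D by apply: Rmult_le_pos; [apply: Rmult_le_pos|]; lra.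
move=> Ht; rewrite /Ec; apply: Rplus_le_le_0_compat; first nra.
by apply: Rmult_le_pos; [apply: Rmult_le_pos|]; lra.
Qed.

Lemma fi_lipschitz i a b : (1 <= i <= m)%nat -> X a -> X b ->
  fi i b - fi i a <= G * vnorm (vsub b a).
Proof. by move=> Hi Ha Hb; apply: (convex_lipschitz _ D) => //; auto. Qed.

Lemma h_lipschitz a b : X a -> X b -> h b - h a <= G * vnorm (vsub b a).
Proof.
move=> Ha Hb; apply: (convex_lipschitz _ D) => //; auto.
exact: strongly_convex_convex (Rlt_le _ _ Hmu) Hh.
Qed.

Lemma f_lipschitz a b : X a -> X b -> fsum m fi b - fsum m fi a <= G * vnorm (vsub b a).
Proof. by move=> Ha Hb; apply: (convex_lipschitz _ D) => //; auto; apply: fsum_convex. Qed.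

Lemma bounded_on_X (F : vec n -> R) : (forall x, vnorm x <= D + 1 -> Rabs (F x) <= K) ->
  forall x, X x -> - K <= F x <= K.
Proof.
move=> HF x Hx; have := HF x ltac:(have := HDX x Hx; lra).
by have := Rle_abs (F x); have := Rle_abs (- F x); rewrite Rabs_Ropp; lra.
Qed.

Lemma weight_bound k : 0 < lambda k / INR m <= lambda 0%nat.
Proof.
have Hm := m_ge1; have Hl := lambda_pos k; have := lambda_antitone 0 k (leq0n k).
split; first by apply: Rdiv_lt_0_compat; lra.
apply: (Rmult_le_reg_r (INR m)); first lra.
by rewrite /Rdiv Rmult_assoc Rinv_l; nra.
Qed.

Definition direction k i := vadd (gf k i) (vscale (lambda k / INR m) (gh k i)).

Lemma inner_step_data k i : (i < m)%nat ->
  subgrad (fi i.+1) (xin k i) (gf k i) /\ subgrad h (xin k i) (gh k i) /\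
  is_proj X (vsub (xin k i) (vscale (gamma k) (direction k i))) (xin k i.+1).
Proof. by move=> Hi; case: Hit => _ /(_ k) [_ [/(_ i Hi) H _]]. Qed.

Lemma direction_bound k i : (i < m)%nat -> vnorm (direction k i) <= Gd.
Proof.
move=> Hi; have [Hg [Hs _]] := inner_step_data k i Hi.
have Hxi : vnorm (xin k i) <= D by apply/HDX/inner_in_X/ltnW.
have Hgb : vnorm (gf k i) <= G.
  by apply: (subgrad_bounded (fi i.+1) D) Hg => //; apply: HKf; rewrite /= Hi.
have Hsb : vnorm (gh k i) <= G by apply: (subgrad_bounded h D) Hs.
apply: Rle_trans (vnorm_add_le _ _) _.
have [Hw0 Hw1] := weight_bound k.
rewrite vnorm_scale Rabs_right; last lra.
by have := vnorm_ge0 (gh k i); rewrite /Gd; nra.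
Qed.

Lemma inner_step_move k i : (i < m)%nat ->
  vnorm (vsub (xin k i.+1) (xin k i)) <= gamma k * Gd.
Proof.
move=> Hi; have [_ [_ Hp]] := inner_step_data k i Hi.
have := proj_nonexpansive X _ _ (xin k i) HXcvx Hp (inner_in_X k i (ltnW Hi)).
have -> : vsub (vsub (xin k i) (vscale (gamma k) (direction k i))) (xin k i)
          = vscale (- gamma k) (direction k i) by vec_ring.
move/vnorm_le_of_dot; rewrite vnorm_scale Rabs_Ropp Rabs_right; last exact/Rle_ge/Rlt_le/gamma_pos.
by have := direction_bound k i Hi; have := gamma_pos k; nra.
Qed.

Lemma inner_drift k i : (i <= m)%nat -> vnorm (vsub (xin k i) (xk k)) <= INR i * (gamma k * Gd).
Proof.
elim: i => [|i IH] Hi.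
  have -> : xin k 0%nat = xk k by case: Hit => _ /(_ k) [-> _].
  rewrite Rmult_0_l; apply: vnorm_le_of_dot_le; first lra.
  by rewrite Rmult_0_l /dot big1 => [|j _]; rewrite /vsub ?Rminus_diag ?Rmult_0_l; lra.
apply: Rle_trans (vnorm_triangle _ (xin k i) _) _.
by have := inner_step_move k i Hi; have := IH (ltnW Hi); rewrite S_INR; lra.
Qed.

Lemma sqdist_shift a b y : X a -> X b -> X y ->
  dot (vsub a y) (vsub a y) - dot (vsub b y) (vsub b y) <= 4 * D * vnorm (vsub a b).
Proof.
move=> Ha Hb Hy.
have Htri := vnorm_triangle a b y.
have Hay : vnorm (vsub a y) <= 2 * D.
  by apply: Rle_trans (vnorm_sub_le _ _) _; have := HDX a Ha; have := HDX y Hy; lra.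
have Hby : vnorm (vsub b y) <= 2 * D.
  by apply: Rle_trans (vnorm_sub_le _ _) _; have := HDX b Hb; have := HDX y Hy; lra.
have := vnorm_ge0 (vsub a y); have := vnorm_ge0 (vsub b y); have := vnorm_ge0 (vsub a b).
rewrite -!vnorm_sq; nra.
Qed.

Definition progress j c x y :=
  (fi j x - fi j y) + c * (h x - h y + mu / 2 * dot (vsub x y) (vsub x y)).

Lemma progress_shift j c a b y : (1 <= j <= m)%nat -> 0 <= c <= lambda 0%nat ->
  X a -> X b -> X y ->
  progress j c a y <= progress j c b y + vnorm (vsub a b) * (Gd + 2 * lambda 0%nat * mu * D).
Proof.
move=> Hj [Hc0 Hc1] Ha Hb Hy; rewrite /progress /Gd.
have Hf := fi_lipschitz j b a Hj Hb Ha; have Hhl := h_lipschitz b a Hb Ha.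
have Hsq := sqdist_shift a b y Ha Hb Hy.
set v := vnorm (vsub a b) in Hf Hhl Hsq *.
have Hv : 0 <= v := vnorm_ge0 _.
have HGv : 0 <= G * v by apply: Rmult_le_pos => //; apply: G_ge0.
have Hh' : c * (h a - h b) <= lambda 0%nat * (G * v).
  have : c * (h a - h b) <= c * (G * v) by apply: Rmult_le_compat_l; lra.
  have : c * (G * v) <= lambda 0%nat * (G * v) by apply: Rmult_le_compat_r.
  lra.
have Hq : c * (mu / 2 * (dot (vsub a y) (vsub a y) - dot (vsub b y) (vsub b y)))
          <= lambda 0%nat * (2 * mu * D * v).
  have HmDv : 0 <= 2 * mu * D * v by apply: Rmult_le_pos => //; nra.
  have : mu / 2 * (dot (vsub a y) (vsub a y) - dot (vsub b y) (vsub b y)) <= 2 * mu * D * v.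
    have := Rmult_le_compat_l (mu / 2) _ _ ltac:(lra) Hsq; lra.
  move=> Hmu2; have : c * (2 * mu * D * v) <= lambda 0%nat * (2 * mu * D * v).
    by apply: Rmult_le_compat_r.
  have := Rmult_le_compat_l c _ _ Hc0 Hmu2; lra.
lra.
Qed.

Lemma inner_descent k i y : (i < m)%nat -> X y ->
  dot (vsub (xin k i.+1) y) (vsub (xin k i.+1) y) <=
  dot (vsub (xin k i) y) (vsub (xin k i) y)
  - 2 * gamma k * progress i.+1 (lambda k / INR m) (xin k i) y + gamma k * gamma k * (Gd * Gd).
Proof.
move=> Hi Hy; have [Hg [Hs Hp]] := inner_step_data k i Hi.
set xi := xin k i in Hg Hs Hp *; set c := lambda k / INR m.
have Hne := proj_nonexpansive X _ _ y HXcvx Hp Hy.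
have Hshift : vsub (vsub xi (vscale (gamma k) (direction k i))) y
              = vsub (vsub xi y) (vscale (gamma k) (direction k i)) by vec_ring.
have Hdd : dot (direction k i) (direction k i) <= Gd * Gd.
  by have := direction_bound k i Hi; have := vnorm_ge0 (direction k i); rewrite -vnorm_sq; nra.
rewrite Hshift (dot_vsub_expand (vsub xi y)) dotZr dotZl dotZr in Hne.
set a := dot (vsub xi y) (gf k i); set b := dot (vsub xi y) (gh k i).
have Hdir : dot (vsub xi y) (direction k i) = a + c * b by rewrite /direction dotDr dotZr.
have Hfa : fi i.+1 xi - fi i.+1 y <= a by have := Hg y; rewrite dot_vsub_swap -/a; lra.
have Hhb : h xi - h y + mu / 2 * dot (vsub xi y) (vsub xi y) <= b.
  by have := strongly_convex_subgrad mu h xi _ Hh Hs y; rewrite dot_vsub_swap dot_vsubC -/b; lra.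
have [Hc0 _] := weight_bound k; have Hgam := gamma_pos k.
have Hprog : gamma k * progress i.+1 c xi y <= gamma k * (a + c * b).
  apply: Rmult_le_compat_l; first lra.
  by rewrite /progress; have := Rmult_le_compat_l c _ _ (Rlt_le _ _ Hc0) Hhb; lra.
have := Rmult_le_compat_l (gamma k * gamma k) _ _ ltac:(nra) Hdd.
rewrite Hdir in Hne; lra.
Qed.

(* One inner step, with the progress measured at the outer iterate x_k; the
   drift of the inner iterates is absorbed in the error term gamma_k^2 Ec. *)
Lemma inner_step_estimate k i y : (i < m)%nat -> X y ->
  dot (vsub (xin k i.+1) y) (vsub (xin k i.+1) y) <=
  dot (vsub (xin k i) y) (vsub (xin k i) y)
  - 2 * gamma k * progress i.+1 (lambda k / INR m) (xk k) y + gamma k * gamma k * Ec.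
Proof.
move=> Hi Hy.
have Hshift := progress_shift i.+1 (lambda k / INR m) (xk k) (xin k i) y ltac:(by rewrite /= Hi)
  ltac:(have := weight_bound k; lra) (iterate_in_X k) (inner_in_X k i (ltnW Hi)) Hy.
have Hdrift : vnorm (vsub (xk k) (xin k i)) <= INR m * (gamma k * Gd).
  rewrite vnorm_subC; apply: Rle_trans (inner_drift k i (ltnW Hi)) _.
  apply: Rmult_le_compat_r; first by have := gamma_pos k; have := Gd_ge0; nra.
  exact/le_INR/leP/ltnW.
have HE : 0 <= Gd + 2 * lambda 0%nat * mu * D.
  have HmD : 0 <= lambda 0%nat * mu * D.
    by apply: Rmult_le_pos; [apply: Rmult_le_pos|]; [exact/Rlt_le/lambda_pos | lra | lra].
  by have := Gd_ge0; lra.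
have Herr := Rmult_le_compat_r _ _ _ HE Hdrift.
have Hgam := gamma_pos k.
have := inner_descent k i y Hi Hy; rewrite /Ec; nra.
Qed.

Lemma outer_partial_estimate k y j : X y -> (j <= m)%nat ->
  dot (vsub (xin k j) y) (vsub (xin k j) y) <=
  dot (vsub (xk k) y) (vsub (xk k) y)
  - 2 * gamma k * (fsum j fi (xk k) - fsum j fi y)
  - 2 * gamma k * (INR j * (lambda k / INR m))
      * (h (xk k) - h y + mu / 2 * dot (vsub (xk k) y) (vsub (xk k) y))
  + INR j * (gamma k * gamma k * Ec).
Proof.
move=> Hy; elim: j => [|j IH] Hj.
  have -> : xin k 0%nat = xk k by case: Hit => _ /(_ k) [-> _].
  by rewrite /fsum !big_geq //= ; lra.
have := inner_step_estimate k j y Hj Hy; have := IH (ltnW Hj).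
rewrite S_INR /fsum !big_nat_recr //= -!/(fsum j fi _) /progress; lra.
Qed.

Lemma outer_estimate k y : is_argmin X (Freg k) y ->
  dot (vsub (xk k.+1) y) (vsub (xk k.+1) y) <=
  (1 - gamma k * lambda k * mu) * dot (vsub (xk k) y) (vsub (xk k) y)
  + INR m * (gamma k * gamma k * Ec).
Proof.
move=> [Hy Hmin].
have := outer_partial_estimate k y m Hy (leqnn m).
have -> : xin k m = xk k.+1 by case: Hit => _ /(_ k) [_ [_ ->]].
have -> : INR m * (lambda k / INR m) = lambda k by field; have := m_ge1; lra.
have := Hmin (xk k) (iterate_in_X k); rewrite /Freg => Hopt.
have : 0 <= 2 * gamma k * (fsum m fi (xk k) + lambda k * h (xk k) - (fsum m fi y + lambda k * h y)).
  by apply: Rmult_le_pos; [have := gamma_pos k|]; lra.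
lra.
Qed.

Lemma Freg_midpoint k a b :
  Freg k (cmb (1/2) a b) <= Freg k a / 2 + Freg k b / 2 - lambda k * mu / 8 * dot (vsub a b) (vsub a b).
Proof.
have Hf := fsum_convex fi m Hfi a b (1/2) ltac:(lra).
have Hs := Hh a b (1/2) ltac:(lra); rewrite vnorm_pow2 in Hs.
have := Rmult_le_compat_l (lambda k) _ _ (Rlt_le _ _ (lambda_pos k)) Hs.
rewrite /Freg /cmb; lra.
Qed.

Lemma Freg_growth k a b : is_argmin X (Freg k) b -> X a ->
  lambda k * mu / 4 * dot (vsub a b) (vsub a b) <= Freg k a - Freg k b.
Proof.
move=> [Hb Hmin] Ha.
have := Hmin _ (HXcvx a b (1/2) Ha Hb ltac:(lra)).
have := Freg_midpoint k a b; rewrite /cmb; lra.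
Qed.

Lemma reg_path_step k a b : is_argmin X (Freg k) a -> is_argmin X (Freg k.+1) b ->
  vnorm (vsub a b) <= 4 * G / mu * (lambda k / lambda k.+1 - 1).
Proof.
move=> Ha Hb.
have Hga := Freg_growth k.+1 a b Hb (proj1 Ha).
have Hgb := Freg_growth k b a Ha (proj1 Hb); rewrite dot_vsubC in Hgb.
have Hl := lambda_pos k; have Hl1 := lambda_pos k.+1.
have Hmon := lambda_antitone k k.+1 (leqnSn k).
have Hlip := h_lipschitz a b (proj1 Ha) (proj1 Hb).
rewrite /Freg in Hga Hgb; rewrite -vnorm_sq in Hga Hgb.
set v := vnorm (vsub a b) in Hga Hgb Hlip *; set v' := vnorm (vsub b a) in Hlip.
have Hvv : v' = v by rewrite /v /v' vnorm_subC.
rewrite Hvv in Hlip.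
have Hv : 0 <= v := vnorm_ge0 _.
have HG := G_ge0.
(* adding the two growth inequalities *)
have Hsum : lambda k.+1 * mu / 4 * (v * v) <= (lambda k - lambda k.+1) * (G * v).
  have : 0 <= lambda k * mu / 4 * (v * v) by apply: Rmult_le_pos; nra.
  have := Rmult_le_compat_l (lambda k - lambda k.+1) _ _ ltac:(lra) Hlip; lra.
have -> : 4 * G / mu * (lambda k / lambda k.+1 - 1)
          = (lambda k - lambda k.+1) * G / (lambda k.+1 * mu / 4) by field; lra.
have Hden : 0 < lambda k.+1 * mu / 4 by nra.
apply: (Rmult_le_reg_r (lambda k.+1 * mu / 4)) => //.
have -> : (lambda k - lambda k.+1) * G / (lambda k.+1 * mu / 4) * (lambda k.+1 * mu / 4)
          = (lambda k - lambda k.+1) * G by field; lra.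
have [Hv0|Hvp] : v = 0 \/ 0 < v by lra.
  by rewrite Hv0; nra.
apply: (Rmult_le_reg_r v) => //; lra.
Qed.

Section Tracking.
Variable xlam : nat -> vec n.
Hypothesis Hxlam : forall k, is_argmin X (Freg k) (xlam k).

Let B := 4 * G / mu.
Let track_err k := dot (vsub (xk k.+1) (xlam k)) (vsub (xk k.+1) (xlam k)).
Let rate k := gamma k.+1 * lambda k.+1 * mu / (4 * INR m).
Let path_drift k := / (gamma k.+1 * lambda k.+1) * (lambda k / lambda k.+1 - 1) ^ 2.
Let noise k := 4 * INR m * (B * B) / mu * path_drift k + INR m * Ec * gamma k.+1 ^ 2.

Lemma track_recursion k : track_err k.+1 <= (1 - rate k) * track_err k + noise k.
Proof.
have Hout := outer_estimate k.+1 (xlam k.+1) (Hxlam k.+1).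
have Hstep := reg_path_step k (xlam k) (xlam k.+1) (Hxlam k) (Hxlam k.+1).
have Hg := gamma_pos k.+1; have Hl := lambda_pos k.+1; have Hm := m_ge1.
set q := gamma k.+1 * lambda k.+1 * mu in Hout.
set p := q / (2 * INR m).
have Hq : 0 < q by apply: Rmult_lt_0_compat => //; apply: Rmult_lt_0_compat.
have Hp : 0 < p <= 1.
  split; first by apply: Rdiv_lt_0_compat; lra.
  apply: (Rmult_le_reg_r (2 * INR m)); first lra.
  by rewrite /p /Rdiv Rmult_assoc Rinv_l; [have := contraction_le k.+1; rewrite -/q | ]; lra.
have Hpq : p <= q.
  apply: (Rmult_le_reg_r (2 * INR m)); first lra.
  by rewrite /p /Rdiv Rmult_assoc Rinv_l; nra.
set W := dot (vsub (xk k.+1) (xlam k.+1)) (vsub (xk k.+1) (xlam k.+1)) in Hout.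
set e := vnorm (vsub (xk k.+1) (xlam k)).
set u := B * (lambda k / lambda k.+1 - 1) in Hstep.
have He : 0 <= e := vnorm_ge0 _.
have Hu : 0 <= u by apply: Rle_trans Hstep; apply: vnorm_ge0.
(* the minimizer moves by at most u between iterations k and k + 1 *)
have HW : W <= (e + u) * (e + u).
  rewrite /W -vnorm_sq; have := vnorm_ge0 (vsub (xk k.+1) (xlam k.+1)).
  have := vnorm_triangle (xk k.+1) (xlam k) (xlam k.+1); rewrite -/e; nra.
have HW0 : 0 <= W := dot_ge0 _.
have Hyoung := young_shift p e u Hp.
have Hak : track_err k = e * e by rewrite /track_err /e vnorm_sq.
have Hrate : rate k = p / 2 by rewrite /rate /p /q; field; lra.
have Hnoise : noise k = 2 / p * (u * u) + INR m * (gamma k.+1 * gamma k.+1 * Ec).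
  by rewrite /noise /path_drift /p /q /u /B /=; field; repeat split; lra.
rewrite Hak Hrate Hnoise /track_err -/W.
have : (1 - q) * W <= (1 - p) * ((e + u) * (e + u)) by nra.
lra.
Qed.

Lemma track_rate_diverges : cv_infty (sum_f_R0 rate).
Proof.
case: HA2 => _ [_ [_ [Hdiv _]]] M.
have Hm := m_ge1.
have Hc0 : 0 < mu / (4 * INR m) by apply: Rdiv_lt_0_compat; lra.
have [N HN] := Hdiv (M / (mu / (4 * INR m)) + gamma 0%nat * lambda 0%nat).
exists N => k Hk.
have -> : sum_f_R0 rate k = mu / (4 * INR m) *
    (sum_f_R0 (fun j => gamma j * lambda j) k.+1 - gamma 0%nat * lambda 0%nat).
  rewrite -(sum_shift (fun j => gamma j * lambda j)) scal_sum; apply: sum_eq => j _.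
  by rewrite /rate; field; lra.
have -> : M = mu / (4 * INR m) * (M / (mu / (4 * INR m))) by field; lra.
by apply: Rmult_lt_compat_l => //; have := HN k.+1 ltac:(lia); lra.
Qed.

Lemma track_noise_summable : exists l, Un_cv (sum_f_R0 noise) l.
Proof.
case: HA2 => _ [_ [_ [_ [[lw Hlw] [[lg Hlg] _]]]]].
exists (4 * INR m * (B * B) / mu * lw + INR m * Ec * (lg - gamma 0%nat ^ 2)).
apply: (cv_ext (fun N => 4 * INR m * (B * B) / mu * sum_f_R0 path_drift N +
                  INR m * Ec * (sum_f_R0 (fun j => gamma j ^ 2) N.+1 - gamma 0%nat ^ 2))).
  move=> N; rewrite -(sum_shift (fun j => gamma j ^ 2)) !scal_sum /noise plus_sum.
  by congr (_ + _); apply: sum_eq => j _; ring.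
apply: CV_plus; apply: CV_mult; try exact: cv_const; first exact: Hlw.
apply: CV_minus; last exact: cv_const.
by move=> eps Heps; have [N HN] := Hlg eps Heps; exists N => k Hk; apply: HN; lia.
Qed.

Lemma iterates_track_path : Un_cv (fun k => vnorm (vsub (xk k.+1) (xlam k))) 0.
Proof.
have [l Hnoise] := track_noise_summable.
have Hpolyak : Un_cv track_err 0.
  apply: (polyak track_err rate noise l) => //.
  - by move=> k; apply: dot_ge0.
  - move=> k; have Hg := gamma_pos k.+1; have Hl := lambda_pos k.+1; have Hm := m_ge1.
    apply: Rmult_le_pos; last by apply/Rlt_le/Rinv_0_lt_compat; lra.
    by apply: Rmult_le_pos; [apply: Rmult_le_pos|]; lra.
  - move=> k; have Hg := gamma_pos k.+1; have Hl := lambda_pos k.+1; have Hm := m_ge1.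
    have Hw : 0 <= path_drift k.
      apply: Rmult_le_pos; last exact: pow2_ge_0.
      by apply/Rlt_le/Rinv_0_lt_compat/Rmult_lt_0_compat.
    have HB : 0 <= 4 * INR m * (B * B) / mu.
      by apply: Rmult_le_pos; [nra | apply/Rlt_le/Rinv_0_lt_compat].
    apply: Rplus_le_le_0_compat; first exact: Rmult_le_pos.
    by apply: Rmult_le_pos; [have := Ec_ge0; nra | apply: pow2_ge_0].
  - exact: track_recursion.
  - exact: track_rate_diverges.
apply: cv_sqrt0 => [k|]; first exact: vnorm_ge0.
by apply: (cv_ext track_err) => // k; rewrite /track_err vnorm_sq.
Qed.

End Tracking.

Lemma reg_minimizer_exists k : exists z, is_argmin X (Freg k) z.
Proof.
have Hl := lambda_pos k; have HG := G_ge0.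
apply: (exists_minimizer X (Freg k) (G + lambda k * G) (lambda k * mu / 8) (- K - lambda k * K)) => //.
- by case: HXcpt.
- by apply: Rmult_lt_0_compat => //; nra.
- move=> a b Ha Hb; have := f_lipschitz b a Hb Ha; have := h_lipschitz b a Hb Ha.
  rewrite /Freg => Hhl Hfl.
  have := Rmult_le_compat_l (lambda k) _ _ (Rlt_le _ _ Hl) Hhl; lra.
- by move=> a b _ _; apply: Freg_midpoint.
- move=> x Hx; have := bounded_on_X _ HKs x Hx; have := bounded_on_X _ HKh x Hx.
  rewrite /Freg => Hhx Hfx; have := Rmult_le_compat_l (lambda k) _ _ (Rlt_le _ _ Hl) (proj1 Hhx).
  lra.
Qed.

Section RegularizationPath.
Variables (z : nat -> vec n) (xh : vec n).
Hypotheses (Hz : forall k, is_argmin X (Freg k) (z k))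
  (Hxh : is_argmin (is_argmin X (fsum m fi)) h xh) (Hl0 : Un_cv lambda 0).

Lemma path_in_X k : X (z k).
Proof. by case: (Hz k). Qed.

Lemma xh_in_X : X xh.
Proof. by case: Hxh => -[]. Qed.

(* Each x*_k has h-value at most h(xh): compare with xh in f + lambda_k h. *)
Lemma path_h_le k : h (z k) <= h xh.
Proof.
have [_ Hmin] := Hz k; have := Hmin xh xh_in_X.
case: Hxh => -[_ Hfxh] _; have := Hfxh (z k) (path_in_X k).
rewrite /Freg => Hf Hk; apply: (Rmult_le_reg_l (lambda k)); [exact: lambda_pos | lra].
Qed.

Lemma path_h_increase j k : (j <= k)%nat ->
  0 <= h (z k) - h (z j) /\ mu / 4 * dot (vsub (z j) (z k)) (vsub (z j) (z k)) <= h (z k) - h (z j).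
Proof.
move=> Hjk.
have Hgj := Freg_growth j (z k) (z j) (Hz j) (path_in_X k).
have Hgk := Freg_growth k (z j) (z k) (Hz k) (path_in_X j).
rewrite dot_vsubC in Hgj; rewrite /Freg in Hgj Hgk.
have Hlj := lambda_pos j; have Hlk := lambda_pos k; have Hkj := lambda_antitone j k Hjk.
set N := dot (vsub (z j) (z k)) (vsub (z j) (z k)) in Hgj Hgk *.
set Dl := h (z k) - h (z j).
have HN : 0 <= N := dot_ge0 _.
(* adding the two growth inequalities *)
have Hsum : (lambda j + lambda k) * (mu / 4 * N) <= (lambda j - lambda k) * Dl by rewrite /Dl; lra.
have Hc : 0 < (lambda j + lambda k) * (mu / 4) by nra.
have HDl : 0 <= Dl.
  apply: Rnot_lt_le => Hneg.
  have HN0 : N = 0.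
    apply: Rle_antisym => //; rewrite -Rmult_assoc in Hsum.
    have : (lambda j - lambda k) * Dl <= 0 by nra.
    by move=> H; apply: (Rmult_le_reg_l _ _ _ Hc); nra.
  have Hzz : z j = z k.
    apply: functional_extensionality => i.
    by have := f_equal (fun v => v i) (dot_eq0 _ HN0); rewrite /vsub; lra.
  by move: Hneg; rewrite /Dl Hzz; lra.
split => //; apply: (Rmult_le_reg_l (lambda j + lambda k)); nra.
Qed.

Lemma path_cauchy eps : 0 < eps -> exists N, forall j k, (N <= j)%nat -> (N <= k)%nat ->
  vnorm (vsub (z j) (z k)) < eps.
Proof.
move=> Heps.
have Hgrow : Un_growing (fun k => h (z k)).
  by move=> k; have [H _] := path_h_increase k k.+1 (leqnSn k); lra.
have Hub : has_ub (fun k => h (z k)) by exists (h xh) => x [k ->]; apply: path_h_le.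
have [lim Hlim] := growing_cv _ Hgrow Hub.
set delta := mu / 4 * ((eps / 2) * (eps / 2)).
have Hdelta : 0 < delta by apply: Rmult_lt_0_compat; nra.
have [N HN] := CV_Cauchy _ (exist _ lim Hlim) delta Hdelta.
have Hclose a b : (a <= b)%nat -> R_dist (h (z a)) (h (z b)) < delta ->
    vnorm (vsub (z a) (z b)) < eps.
  move=> Hab; rewrite /R_dist Rabs_minus_sym Rabs_right; last by have [] := path_h_increase a b Hab; lra.
  move=> Hd; have [_ Hquad] := path_h_increase a b Hab.
  apply: Rle_lt_trans (_ : eps / 2 < eps); last lra.
  apply: vnorm_le_of_dot_le; first lra.
  by apply: (Rmult_le_reg_l (mu / 4)); [lra | rewrite /delta in Hd; lra].
exists N => j k /leP Hj /leP Hk.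
case: (leqP j k) => Hjk; first exact/Hclose/HN.
rewrite vnorm_subC; apply/Hclose; first exact: ltnW.
by rewrite R_dist_sym; apply: HN.
Qed.

(* The limit of the path is xh: it minimizes f and has h-value at most h(xh). *)
Lemma path_converges : Un_cv (fun k => vnorm (vsub (z k) xh)) 0.
Proof.
have [zb Hzb] := vec_complete z path_cauchy.
have HXzb : X zb by case: HXcpt => Hcl _; exact: Hcl z zb path_in_X Hzb.
have Hzb' : Un_cv (fun k => vnorm (vsub zb (z k))) 0.
  by apply: (cv_ext (fun k => vnorm (vsub (z k) zb))) => // k; apply: vnorm_subC.
case: Hxh => -[_ Hfxh] Hhxh.
(* zb minimizes f: f(x*_k) <= f(xh) + lambda_k (h(xh) - h(x*_k)) <= f(xh) + 2 K lambda_k *)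
have Hfzb : is_argmin X (fsum m fi) zb.
  split => // y Hy; apply: Rle_trans (Hfxh y Hy).
  apply: (le_of_cv0 _ _ (fun k => 2 * K * lambda k + G * vnorm (vsub zb (z k)))).
    by apply: cv_plus0; apply: cv_scal0.
  move=> k; have := f_lipschitz (z k) zb (path_in_X k) HXzb.
  have [_ Hmin] := Hz k; have := Hmin xh xh_in_X; rewrite /Freg.
  have := bounded_on_X _ HKh _ (path_in_X k); have := bounded_on_X _ HKh _ xh_in_X.
  move=> Hh1 Hh2 Hopt Hlip; have Hl := lambda_pos k.
  have : lambda k * (h xh - h (z k)) <= lambda k * (2 * K) by apply: Rmult_le_compat_l; lra.
  lra.
have Hhzb : h zb <= h xh.
  apply: (le_of_cv0 _ _ (fun k => G * vnorm (vsub zb (z k)))); first exact: cv_scal0.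
  move=> k; have := h_lipschitz (z k) zb (path_in_X k) HXzb; have := path_h_le k.
  rewrite vnorm_subC; lra.
have -> : xh = zb.
  apply: esym; apply: (strongly_convex_argmin_unique mu h (is_argmin X (fsum m fi))) => //.
  exact: argmin_convex HXcvx (fsum_convex fi m Hfi).
by apply: (cv_ext (fun k => vnorm (vsub zb (z k)))) => // k; apply: vnorm_subC.
Qed.

End RegularizationPath.

End Estimates.

Lemma iterates_track_minimizers (xlam : nat -> vec n) :
  (forall k, is_argmin X (Freg k) (xlam k)) ->
  Un_cv (fun k => vnorm (vsub (xk k.+1) (xlam k))) 0.
Proof.
have [D [HD0 HDX]] := X_bounded.
have [K [HK0 [HKf [HKh HKs]]]] := functions_bounded (D + 1).
exact: (iterates_track_path D K HD0 HDX HK0 HKf HKh).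
Qed.

Lemma iterates_converge_to_xh : Un_cv lambda 0 ->
  forall xh, is_argmin (is_argmin X (fsum m fi)) h xh -> Un_cv (fun k => vnorm (vsub (xk k) xh)) 0.
Proof.
move=> Hl0 xh Hxh.
have [D [HD0 HDX]] := X_bounded.
have [K [HK0 [HKf [HKh HKs]]]] := functions_bounded (D + 1).
have [z Hz] := choice _ (reg_minimizer_exists D K HDX HK0 HKh HKs).
(* |x_(k+1) - xh| <= |x_(k+1) - x*_k| + |x*_k - xh|, both tending to 0 *)
apply: (CV_shift _ 1); apply: (cv_squeeze0 _ (fun k => vnorm (vsub (xk k.+1) (z k)) + vnorm (vsub (z k) xh))).
  by move=> k; rewrite Nat.add_1_r; split; [apply: vnorm_ge0 | apply: vnorm_triangle].
apply: cv_plus0; first exact: iterates_track_minimizers.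
exact: (path_converges D K HDX HK0 HKh HKs z xh Hz Hxh Hl0).
Qed.

End IRIG.

Theorem proposition1
  (n m : nat) (X : vec n -> Prop) (fi : nat -> vec n -> R) (h : vec n -> R) (mu : R)
  (HXne : exists x, X x) (HXcpt : compact_set X) (HXcvx : convex_set X)
  (Hfi : forall i, (1 <= i <= m)%nat -> convex_fun (fi i))
  (Hmu : 0 < mu) (Hh : strongly_convex mu h)
  (gamma lambda : nat -> R) (HA2 : assumption_A2 m mu gamma lambda)
  (xk : nat -> vec n) (xin : nat -> nat -> vec n) (gf gh : nat -> nat -> vec n)
  (Hit : IRIG X m fi h gamma lambda xk xin gf gh) :
  (* (a): xlam k = x*_{lambda_k}, the minimizer of f + lambda_k h over X *)
  (forall xlam : nat -> vec n,
     (forall k, is_argmin X (fun x => fsum m fi x + lambda k * h x) (xlam k)) ->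
     Un_cv (fun k => vnorm (vsub (xk k.+1) (xlam k))) 0) /\
  (* (b): xh = x*_h, the minimizer of h over X* = argmin_X f *)
  (Un_cv lambda 0 ->
   forall xh : vec n,
     is_argmin (fun x => is_argmin X (fsum m fi) x) h xh ->
     Un_cv (fun k => vnorm (vsub (xk k) xh)) 0).
Proof.
split.
- exact: (iterates_track_minimizers n m X fi h mu HXcpt HXcvx Hfi Hmu Hh
            gamma lambda HA2 xk xin gf gh Hit).
- exact: (iterates_converge_to_xh n m X fi h mu HXne HXcpt HXcvx Hfi Hmu Hh
            gamma lambda HA2 xk xin gf gh Hit).
Qed.
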